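(* For every share function $\rho$, the $\rho$-blame $\mathbf B^\rho$ is an unbiased importance value function.
   Context: $X$ is a fixed finite set of $n=|X|$ variables. An assignment over $U\subseteq X$ is a map $\mathbf u:U\to\{0,1\}$; $\mathbf u;\mathbf v$ is concatenation of assignments with disjoint domains, $\mathbf u_S$ is restriction. For $S\subseteq X$ and $\mathbf u$ over $X$, $\mathbf u^{\oplus S}$ flips the values of the variables in $S$. $\mathbb B(X)$ is the set of Boolean functions $\{0,1\}^X\to\{0,1\}$, combined pointwise by $\lor,\land$ (juxtaposition), $\oplus$, negation $\overline f$; a variable $x$ also denotes $\mathbf u\mapsto\mathbf u(x)$; $f\ge g$ is pointwise. Cofactor: $f_{\mathbf v}(\mathbf u)=f(\mathbf v;\mathbf u_{X\setminus V})$ for $\mathbf v$ over $V$; $f_{x/c}$ for $V=\{x\}$. $\mathrm{dep}(f)=\{x: f_{x/1}\ne f_{x/0}\}$; $f$ is monotone in $x$ if $f_{x/1}\ge f_{x/0}$. $f^{\oplus y}(\mathbf u)=f(\mathbf u^{\oplus\{y\}})$. For a permutation $\sigma$ of $X$: $(\sigma\mathbf u)(x)=\mathbf u(\sigma^{-1}(x))$, $(\sigma f)(\mathbf u)=f(\sigma^{-1}\mathbf u)$. $f[x/s]=s f_{x/1}\lor\overline s f_{x/0}$. Modularity: $f$ is modular in $g$ if $g$ is not constant and there are $\ell\in\mathbb B(X)$, $z\in X$ with $\mathrm{dep}(\ell)\cap\mathrm{dep}(g)=\emptyset$ and $f=\ell[z/g]$; monotonically modular if moreover $\ell$ is monotone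 in $z$. Then $f_{g/1}:=\ell_{z/1}$, $f_{g/0}:=\ell_{z/0}$ (well defined). A value function is a map $\mathfrak I:X\times\mathbb B(X)\to\mathbb R$, $(x,f)\mapsto\mathfrak I_x(f)$. It is an importance value function (IVF) if for all $x,y\in X$, permutations $\sigma$ of $X$ and $f,g,h\in\mathbb B(X)$: (Bound) $0\le\mathfrak I_x(f)\le1$; (Dum) $\mathfrak I_x(f)=0$ if $x\notin\mathrm{dep}(f)$; (Dic) $\mathfrak I_x(x)=\mathfrak I_x(\overline x)=1$; (Type) $\mathfrak I_x(f)=\mathfrak I_{\sigma(x)}(\sigma f)$ and $\mathfrak I_x(f)=\mathfrak I_x(f^{\oplus y})$; (ModEC) $\mathfrak I_x(f)\ge\mathfrak I_x(h)$ whenever $f$ and $h$ are monotonically modular in $g$, $f_{g/1}\ge h_{g/1}$, $h_{g/0}\ge f_{g/0}$, and $x\in\mathrm{dep}(g)$. $\mathfrak I$ is unbiased if $\mathfrak I_x(g)=\mathfrak I_x(\overline g)$ for all $x,g$. Blame: for $f\in\mathbb B(X)$, $x\in X$ and $\mathbf u$ over $X$, a critical set of $x$ in $f$ under $\mathbf u$ is a set $S\subseteq X\setminus\{x\}$ with $f(\mathbf u)=f(\mathbf u^{\oplus S})$ and $f(\mathbf u)\ne f(\mathbf u^{\oplus(S\cup\{x\})})$; $\mathrm{scs}^{\mathbf u}_x(f)$ is the minimum size of a critical set ($\infty$ if none exists). A share function is $\rho:\mathbb N\cup\{\infty\}\to\mathbb R$ that is monotonically decreasing with $\rho(\infty)=\lim_{k\to\infty}\rho(k)=0$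 and $\rho(0)=1$. The $\rho$-blame is $\mathbf B^\rho_x(f)=\mathbb E_{\mathbf u\in\{0,1\}^X}[\rho(\mathrm{scs}^{\mathbf u}_x(f))]$ (uniform distribution). *)

From HB Require Import structures.
From mathcomp Require Import all_boot all_order all_algebra all_fingroup.
From mathcomp Require Import all_classical all_reals all_analysis.
Set Implicit Arguments. Unset Strict Implicit. Unset Printing Implicit Defensive.
Import Order.TTheory GRing.Theory Num.Theory.
Import numFieldNormedType.Exports.
Local Open Scope ring_scope.
Local Open Scope classical_set_scope.

Section Defs.
Variable X : finType.

Definition asg := {ffun X -> bool}.
Definition bfun := {ffun asg -> bool}.

Definition flip (S : {set X}) (u : asg) : asg :=
  [ffun y => if y \in S then ~~ u y else u y].

Definition upd (u : asg) (x : X) (c : bool) : asg :=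
  [ffun y => if y == x then c else u y].

Definition cof (f : bfun) (x : X) (c : bool) : bfun := [ffun u : asg => f (upd u x c)].

Definition dep (f : bfun) : {set X} := [set x | cof f x true != cof f x false].

Definition bge (f g : bfun) : Prop := forall u, g u ==> f u.

Definition monotone_in (f : bfun) (x : X) : Prop := bge (cof f x true) (cof f x false).

Definition bvar (x : X) : bfun := [ffun u : asg => u x].
Definition bneg (f : bfun) : bfun := [ffun u : asg => ~~ f u].

Definition fflip (f : bfun) (y : X) : bfun := [ffun u : asg => f (flip [set y] u)].

Definition perm_asg (s : {perm X}) (u : asg) : asg := [ffun x => u ((s^-1)%g x)].
Definition perm_bfun (s : {perm X}) (f : bfun) : bfun :=
  [ffun u : asg => f (perm_asg (s^-1)%g u)].

Definition subst (f : bfun) (x : X) (s : bfun) : bfun :=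
  [ffun u : asg => (s u && cof f x true u) || (~~ s u && cof f x false u)].

Definition nonconstant (g : bfun) : Prop := exists u v, g u != g v.

(* (l, z) witnesses that f is monotonically modular in g; then
   f_{g/1} := l_{z/1} and f_{g/0} := l_{z/0}. *)
Definition mono_mod_witness (f g l : bfun) (z : X) : Prop :=
  [/\ nonconstant g, dep l :&: dep g = finset.set0, f = subst l z g & monotone_in l z].

Definition mono_modular (f g : bfun) : Prop := exists l z, mono_mod_witness f g l z.

Definition IVF (R : realType) (I : X -> bfun -> R) : Prop :=
  [/\ forall x f, 0 <= I x f <= 1,
      forall x f, x \notin dep f -> I x f = 0,
      forall x, I x (bvar x) = 1 /\ I x (bneg (bvar x)) = 1,
      forall x y (s : {perm X}) f,
                    I x f = I (s x) (perm_bfun s f) /\ I x f = I x (fflip f y)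
    & forall x f h g lf zf lh zh,
                    mono_mod_witness f g lf zf -> mono_mod_witness h g lh zh ->
                    bge (cof lf zf true) (cof lh zh true) ->
                    bge (cof lh zh false) (cof lf zf false) ->
                    x \in dep g -> I x h <= I x f].

Definition unbiased (R : realType) (I : X -> bfun -> R) : Prop :=
  forall x g, I x g = I x (bneg g).

(* critical sets and minimal critical set size (None = infinity) *)
Definition critical (f : bfun) (x : X) (u : asg) (S : {set X}) : bool :=
  [&& x \notin S, f u == f (flip S u) & f u != f (flip (x |: S) u)].

Definition scs (f : bfun) (x : X) (u : asg) : option nat :=
  if [exists S, critical f x u S]
  then Some (\big[minn/#|X|]_(S | critical f x u S) #|S|)
  else None.

End Defs.

Definition le_ext (a b : option nat) : bool :=
  match a, b with
  | _, None => true
  | None, Some _ => false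
  | Some k, Some l => (k <= l)%N
  end.

Definition share_function (R : realType) (rho : option nat -> R) : Prop :=
  [/\ forall a b, le_ext a b -> rho b <= rho a,
      rho None = 0,
      (fun k : nat => rho (Some k)) @ \oo --> 0%R
    & rho (Some 0%N) = 1].

Definition blame (R : realType) (X : finType) (rho : option nat -> R)
  (x : X) (f : bfun X) : R :=
  (#|{: asg X}|%:R)^-1 * \sum_(u : asg X) rho (scs f x u).

From HB Require Import structures.
From mathcomp Require Import all_boot all_order all_algebra all_fingroup.
From mathcomp Require Import all_classical all_reals all_analysis.
Set Implicit Arguments. Unset Strict Implicit. Unset Printing Implicit Defensive.
Import Order.TTheory GRing.Theory Num.Theory.

(* Every IVF axiom is reduced to a pointwise statement about
   minimal critical sets:
   - Bound, Dum and Dic: rho takes values in [0,1], scs is infinite when x is a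
     dummy and 0 when flipping x alone changes f;
   - Type and unbiasedness: permuting variables, flipping a variable y, or
     negating f transport critical sets bijectively, hence preserve scs up to
     a reindexing of the assignments;
   - ModEC: the assignments are paired as {u, u^(+x)}.  If f and h are
     monotonically modular in g with f "dominating" h, then at every point where
     h is pivotal for x the functions f and h agree and f is pivotal too.  Hence
     each critical set of h under u is critical for f under u or under u^(+x),
     and on every pair the two scs values of f are, up to a swap, at most those
     of h.  As rho is decreasing, summing over the pairs yields ModEC. *)

Section FlipAlgebra.
Variable X : finType.
Implicit Types (S T : {set X}) (u : asg X).

Lemma flip0 u : flip finset.set0 u = u.
Proof. by apply/ffunP=> y; rewrite ffunE inE. Qed.

Lemma flipK S : involutive (@flip X S).
Proof. by move=> u; apply/ffunP=> y; rewrite !ffunE; case: (y \in S); rewrite ?negbK. Qed.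

Lemma flipC S T u : flip S (flip T u) = flip T (flip S u).
Proof. by apply/ffunP=> y; rewrite !ffunE; case: (y \in S); case: (y \in T). Qed.

Lemma flipU1 (x : X) S u : x \notin S -> flip (x |: S) u = flip [set x] (flip S u).
Proof.
move=> xS; apply/ffunP=> y; rewrite !ffunE !inE.
by case: (eqVneq y x) => [->|_] /=; first by rewrite (negbTE xS).
Qed.

Lemma flip1_upd (x : X) u : flip [set x] u = upd u x (~~ u x).
Proof. by apply/ffunP=> y; rewrite !ffunE inE; case: eqVneq => [->|]. Qed.

End FlipAlgebra.

Section Independence.
Variable X : finType.
Implicit Types (l : bfun X) (x z : X) (v : asg X).

Lemma nodep_flip l x v : x \notin dep l -> l (flip [set x] v) = l v.
Proof.
rewrite inE negbK => /eqP cofE.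
have updE c : l (upd v x c) = cof l x c v by rewrite ffunE.
have vE : upd v x (v x) = v by apply/ffunP=> y; rewrite ffunE; case: eqVneq => [->|].
by rewrite flip1_upd updE -[in RHS]vE updE; case: (v x); rewrite /= ?cofE.
Qed.

Lemma nodep_cof l x z c v : x \notin dep l -> cof l z c (flip [set x] v) = cof l z c v.
Proof.
move=> xl; rewrite !ffunE; case: (eqVneq z x) => [->|zx].
  by congr (fun_of_fin l); apply/ffunP=> y; rewrite !ffunE inE; case: eqVneq.
have ->: upd (flip [set x] v) z c = flip [set x] (upd v z c).
  apply/ffunP=> y; rewrite !ffunE inE; case: (eqVneq y z) => [->|//].
  by rewrite (negbTE zx).
by rewrite nodep_flip.
Qed.

Lemma disjoint_dep l (g : bfun X) x :
  dep l :&: dep g = finset.set0 -> x \in dep g -> x \notin dep l.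
Proof.
move=> dlg xg; apply/negP=> xl.
have : x \in dep l :&: dep g by rewrite inE xl.
by rewrite dlg inE.
Qed.

End Independence.

Section MinimalCriticalSets.
Variable X : finType.
Implicit Types (f h : bfun X) (x : X) (u : asg X) (S T : {set X}).

Lemma le_ext0 a : le_ext (Some 0%N) a.
Proof. by case: a. Qed.

Lemma le_ext_anti a b : le_ext a b -> le_ext b a -> a = b.
Proof.
by case: a b => [a|] [b|] //= ab ba; congr Some; apply/eqP; rewrite eqn_leq ab ba.
Qed.

Lemma scs_minimal f x u S : critical f x u S -> le_ext (scs f x u) (Some #|S|).
Proof.
move=> cS; rewrite /scs (_ : [exists S, _] = true); last by apply/existsP; exists S.
by rewrite /= -minEnat; exact: (bigmin_le_cond #|X| (fun T => #|T|) cS).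
Qed.

Lemma scs_le f h x x' u u' :
  (forall S, critical h x u S -> exists2 T, critical f x' u' T & (#|T| <= #|S|)%N) ->
  le_ext (scs f x' u') (scs h x u).
Proof.
move=> match_hf; rewrite [scs h x u]/scs.
case: existsP => [[S0 cS0]|_]; last by case: (scs f x' u').
apply: (big_ind (le_ext (scs f x' u') \o Some)) => /=.
- have [T cT _] := match_hf _ cS0.
  by case: (scs f x' u') (scs_minimal cT) => // k /leq_trans; apply; exact: max_card.
- by case: (scs f x' u') => // k a b /= ka kb; rewrite leq_min ka kb.
- move=> S cS; have [T cT leTS] := match_hf S cS.
  by case: (scs f x' u') (scs_minimal cT) => // k /leq_trans; apply.
Qed.

Lemma scs_same f h x x' u u' :
  (forall S, critical h x u S = critical f x' u' S) -> scs f x' u' = scs h x u.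
Proof.
move=> same; apply: le_ext_anti; apply: scs_le => S cS; exists S => //.
  by rewrite -same.
by rewrite same.
Qed.

(* If flipping x alone changes f, the empty set is critical. *)
Lemma scs_pivot f x u : f u != f (flip [set x] u) -> scs f x u = Some 0%N.
Proof.
move=> piv; have c0 : critical f x u finset.set0.
  by rewrite /critical inE flip0 eqxx finset.setU0 piv.
by apply: le_ext_anti (le_ext0 _); rewrite -(cards0 X); exact: scs_minimal.
Qed.

Lemma scs_nodep f x u : x \notin dep f -> scs f x u = None.
Proof.
move=> xf; rewrite /scs; case: existsP => // -[S /and3P [xS /eqP fS]].
by rewrite (flipU1 _ xS) nodep_flip // -fS eqxx.
Qed.

End MinimalCriticalSets.

Section Invariance.
Variable X : finType.
Implicit Types (f g : bfun X) (x y : X) (u : asg X) (S : {set X}).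

Lemma perm_asgK (s : {perm X}) u : perm_asg (s^-1)%g (perm_asg s u) = u.
Proof. by apply/ffunP=> y; rewrite !ffunE invgK permK. Qed.

Lemma perm_asg_inj (s : {perm X}) : injective (perm_asg s).
Proof. exact: can_inj (perm_asgK s). Qed.

Lemma flip_perm (s : {perm X}) S u :
  perm_asg (s^-1)%g (flip S (perm_asg s u)) = flip (s @^-1: S) u.
Proof. by apply/ffunP=> y; rewrite !ffunE invgK permK inE. Qed.

Lemma critical_perm (s : {perm X}) f x u S :
  critical (perm_bfun s f) (s x) (perm_asg s u) S = critical f x u (s @^-1: S).
Proof.
rewrite /critical !ffunE perm_asgK !flip_perm inE.
suff -> : s @^-1: (s x |: S) = x |: s @^-1: S by [].
by apply/setP=> y; rewrite !inE (inj_eq perm_inj).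
Qed.

(* Renaming variables maps critical sets bijectively (via s^-1) and keeps their size. *)
Lemma scs_perm (s : {perm X}) f x u :
  scs (perm_bfun s f) (s x) (perm_asg s u) = scs f x u.
Proof.
have card_pre (t : {perm X}) S : #|t @^-1: S| = #|S|.
  by apply: card_preimset; exact: perm_inj.
have preK S : s @^-1: ((s^-1)%g @^-1: S) = S.
  by apply/setP=> y; rewrite !inE permK.
apply: le_ext_anti; apply: scs_le => S cS.
- by exists ((s^-1)%g @^-1: S); [rewrite critical_perm preK | rewrite card_pre].
- by exists (s @^-1: S); [rewrite -critical_perm | rewrite card_pre].
Qed.

(* Flipping an input y of f: the critical sets under u^(+y) are those under u. *)
Lemma scs_fflip f x y u : scs (fflip f y) x (flip [set y] u) = scs f x u.
Proof.
apply: scs_same => S; rewrite /critical !ffunE flipK.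
by rewrite (flipC S) (flipC (x |: S)) !flipK.
Qed.

(* Negating f does not change which flips change its value. *)
Lemma scs_bneg g x u : scs (bneg g) x u = scs g x u.
Proof.
apply: scs_same => S; rewrite /critical !ffunE.
by case: (g u); case: (g (flip S u)); case: (g (flip (x |: S) u)).
Qed.

End Invariance.

Local Open Scope ring_scope.

Lemma sum_le_pairwise (T : finType) (R : numDomainType) (s : T -> T) (F G : T -> R) :
  involutive s -> (forall u, G u + G (s u) <= F u + F (s u)) ->
  \sum_u G u <= \sum_u F u.
Proof.
move=> sK GF.
have pair_sum H : \sum_u (H u + H (s u)) = (\sum_u H u) *+ 2 :> R.
  by rewrite big_split /= (reindex_inj (inv_inj sK)) mulr2n.
by rewrite -(ler_pMn2r (n := 2)) // -!pair_sum; apply: ler_sum.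
Qed.

Lemma substE (X : finType) (l s : bfun X) z u :
  subst l z s u = (s u && cof l z true u) || (~~ s u && cof l z false u).
Proof. by rewrite ffunE. Qed.

Section ModularDomination.
Variable X : finType.
Variables (f h g lf lh : bfun X) (zf zh x : X).
Hypotheses (wf : mono_mod_witness f g lf zf) (wh : mono_mod_witness h g lh zh).
Hypotheses (dom1 : bge (cof lf zf true) (cof lh zh true))
  (dom0 : bge (cof lh zh false) (cof lf zf false)).
Hypothesis xg : x \in dep g.
Implicit Types (u v : asg X) (S : {set X}).

(* Where h is pivotal for x, f agrees with h and is pivotal too: flipping x
   only flips g (x is outside dep lf and dep lh), so h is pivotal only if
   lh_{z/1} = 1 and lh_{z/0} = 0 there (monotonicity); the dominations then
   force the same values for lf, whence f = g = h at v and at v^(+x). *)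
Lemma pivot_agree v : h v != h (flip [set x] v) ->
  f v = h v /\ f (flip [set x] v) = h (flip [set x] v).
Proof.
case: wf => _ dlf -> mf; case: wh => _ dlh -> mh.
have xlf := disjoint_dep dlf xg; have xlh := disjoint_dep dlh xg.
rewrite !substE !(nodep_cof _ _ _ xlf) !(nodep_cof _ _ _ xlh).
move: (dom1 v) (dom0 v) (mf v) (mh v).
by case: (g v); case: (g (flip [set x] v)); case: (cof lf zf true v);
  case: (cof lf zf false v); case: (cof lh zh true v); case: (cof lh zh false v).
Qed.

Lemma critical_pivot u S : critical h x u S ->
  [/\ x \notin S, h (flip S u) = h u, f (flip S u) = h u & f (flip (x |: S) u) != h u].
Proof.
case/and3P=> xS /eqP hS hpiv; rewrite (flipU1 _ xS) in hpiv *.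
have [|fv fxv] := pivot_agree (v := flip S u); first by rewrite -hS.
by rewrite fv fxv -hS eq_sym.
Qed.

Lemma critical_transfer u S : f u = h u -> critical h x u S -> critical f x u S.
Proof.
move=> fh /critical_pivot [xS _ fS fxS].
by rewrite /critical xS fS fh eqxx eq_sym fxS.
Qed.

Lemma critical_transfer_flip u S :
  f u = f (flip [set x] u) -> f u != h u -> critical h x u S ->
  critical f x (flip [set x] u) S.
Proof.
move=> fx fh /critical_pivot [xS _ fS fxS].
have flipSx : flip S (flip [set x] u) = flip (x |: S) u by rewrite flipC -flipU1.
have flipxSx : flip (x |: S) (flip [set x] u) = flip S u.
  by rewrite (flipU1 _ xS) flipC flipK.
rewrite /critical xS -fx flipSx flipxSx fS.
by move: fh fxS; case: (f u); case: (h u); case: (f (flip (x |: S) u)).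
Qed.

Lemma scs_pair_dominated u (u' := flip [set x] u) :
  (le_ext (scs f x u) (scs h x u) /\ le_ext (scs f x u') (scs h x u')) \/
  (le_ext (scs f x u') (scs h x u) /\ le_ext (scs f x u) (scs h x u')).
Proof.
have u'K : flip [set x] u' = u by rewrite flipK.
have [fx|fpiv] := eqVneq (f u) (f u'); last first.
  have fpiv' : f u' != f (flip [set x] u') by rewrite u'K eq_sym.
  by left; rewrite (scs_pivot fpiv) (scs_pivot fpiv'); split; exact: le_ext0.
have hx : h u = h u'.
  have [//|hpiv] := eqVneq (h u) (h u').
  by have [fu fu'] := pivot_agree hpiv; move: hpiv; rewrite -fu -fu' fx eqxx.
have transfer u1 : (forall S, critical h x u S -> critical f x u1 S) ->
    le_ext (scs f x u1) (scs h x u).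
  by move=> tr; apply: scs_le => S cS; exists S; rewrite ?tr.
have transfer' u1 : (forall S, critical h x u' S -> critical f x u1 S) ->
    le_ext (scs f x u1) (scs h x u').
  by move=> tr; apply: scs_le => S cS; exists S; rewrite ?tr.
have [fh|fh] := eqVneq (f u) (h u).
- left; split; [apply: transfer | apply: transfer'] => S; apply: critical_transfer => //.
  by rewrite -fx fh hx.
- right; split; [apply: transfer | apply: transfer'] => S.
    exact: critical_transfer_flip.
  have := critical_transfer_flip (u := u') (S := S); rewrite u'K; apply.
  - by rewrite fx.
  - by rewrite -fx -hx.
Qed.

Lemma sum_scs_dominated (R : numDomainType) (rho : option nat -> R) :
  (forall a b, le_ext a b -> rho b <= rho a) ->
  \sum_u rho (scs h x u) <= \sum_u rho (scs f x u).
Proof.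
move=> rho_mono; apply: (sum_le_pairwise (@flipK X [set x])) => u.
case: (scs_pair_dominated u) => [[le1 le2]|[le1 le2]]; last rewrite [leRHS]addrC;
  by apply: lerD; apply: rho_mono.
Qed.

End ModularDomination.

Section BlameAxioms.
Variables (R : realType) (X : finType) (rho : option nat -> R).
Hypothesis rho_share : share_function rho.
Implicit Types (f g : bfun X) (x y : X).

Lemma rho_mono a b : le_ext a b -> rho b <= rho a.
Proof. by case: rho_share => mono _ _ _; apply: mono. Qed.

(* A share function takes its values between rho oo = 0 and rho 0 = 1. *)
Lemma rho_bound a : 0 <= rho a <= 1.
Proof.
case: rho_share => _ rho_oo _ rho_0.
by rewrite -{1}rho_oo -rho_0 !rho_mono ?le_ext0 //; case: a.
Qed.

Lemma card_asg_gt0 : (0 < #|{: asg X}|)%N.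
Proof. by apply/card_gt0P; exists [ffun=> true]. Qed.

Lemma avg_const (c : R) : (#|{: asg X}|%:R)^-1 * \sum_(u : asg X) c = c.
Proof.
rewrite sumr_const -[c *+ _]mulr_natl mulrA (_ : #|xpredT| = #|asg X|) //.
by rewrite mulVf ?mul1r // pnatr_eq0 -lt0n card_asg_gt0.
Qed.

Lemma avg_le (F G : asg X -> R) : \sum_u F u <= \sum_u G u ->
  (#|{: asg X}|%:R)^-1 * \sum_u F u <= (#|{: asg X}|%:R)^-1 * \sum_u G u.
Proof. by apply: ler_wpM2l; rewrite invr_ge0 ler0n. Qed.

Lemma blame_const f x c : (forall u, rho (scs f x u) = c) -> blame rho x f = c.
Proof. by move=> scsE; rewrite /blame (eq_bigr (fun=> c)) ?avg_const. Qed.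

Lemma blame_reindex f g x y (p : asg X -> asg X) :
  injective p -> (forall u, scs g y (p u) = scs f x u) ->
  blame rho x f = blame rho y g.
Proof.
move=> p_inj scsE; rewrite /blame [in RHS](reindex_inj p_inj).
by congr (_ * _); apply: eq_bigr => u _; rewrite scsE.
Qed.

Lemma blame_bound x f : 0 <= blame rho x f <= 1.
Proof.
apply/andP; split.
  rewrite -(avg_const 0) /blame; apply: avg_le; apply: ler_sum => u _.
  by case/andP: (rho_bound (scs f x u)).
rewrite -[leRHS](avg_const 1) /blame; apply: avg_le; apply: ler_sum => u _.
by case/andP: (rho_bound (scs f x u)).
Qed.

(* Dum: a dummy variable has infinite scs everywhere, so its blame is rho oo = 0. *)
Lemma blame_dummy x f : x \notin dep f -> blame rho x f = 0.
Proof.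
case: rho_share => _ rho_oo _ _ xf.
by apply: blame_const => u; rewrite scs_nodep ?rho_oo.
Qed.

(* Dic: x is pivotal for x and for its negation under every assignment. *)
Lemma blame_dictator x : blame rho x (bvar x) = 1 /\ blame rho x (bneg (bvar x)) = 1.
Proof.
case: rho_share => _ _ _ rho_0.
have piv u : bvar x u != bvar x (flip [set x] u).
  by rewrite !ffunE inE eqxx; case: (u x).
by split; apply: blame_const => u; rewrite ?scs_bneg (scs_pivot (piv u)) rho_0.
Qed.

Lemma blame_perm x (s : {perm X}) f : blame rho x f = blame rho (s x) (perm_bfun s f).
Proof. by apply: (blame_reindex (@perm_asg_inj X s)) => u; rewrite scs_perm. Qed.

Lemma blame_fflip x y f : blame rho x f = blame rho x (fflip f y).
Proof. by apply: (blame_reindex (can_inj (flipK [set y]))) => u; rewrite scs_fflip. Qed.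

Lemma blame_bneg x g : blame rho x g = blame rho x (bneg g).
Proof. by apply: (blame_reindex (@inj_id _)) => u; rewrite scs_bneg. Qed.

Lemma blame_modEC x f h g lf zf lh zh :
  mono_mod_witness f g lf zf -> mono_mod_witness h g lh zh ->
  bge (cof lf zf true) (cof lh zh true) -> bge (cof lh zh false) (cof lf zf false) ->
  x \in dep g -> blame rho x h <= blame rho x f.
Proof.
move=> wf wh dom1 dom0 xg; apply: avg_le.
exact: (sum_scs_dominated wf wh dom1 dom0 xg rho_mono).
Qed.

End BlameAxioms.

Theorem mainTheorem3 (R : realType) (X : finType) (rho : option nat -> R) :
  share_function rho -> IVF (@blame R X rho) /\ unbiased (@blame R X rho).
Proof.
move=> rho_share; split; last exact: blame_bneg.
split.
- exact: blame_bound.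
- exact: blame_dummy.
- exact: blame_dictator.
- by move=> x y s f; split; [exact: blame_perm | exact: blame_fflip].
- exact: blame_modEC.
Qed.
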